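(* Let $(X,b)$ be a locally finite weighted graph, $F$ a Hermitian vector bundle over $X$, $\Phi$ a connection on $F$, $W$ a self-adjoint bundle endomorphism, and $\mathcal M=\mathcal M_{b,\Phi,W}\colon\Gamma(X;F)\to\Gamma(X;F)$. Then $\mathcal M$ is continuous and, identifying the continuous dual of $\Gamma(X;F)$ with $\Gamma_c(X;F)$ via the pairing $(\varphi,f)=\sum_x\langle\varphi(x),f(x)\rangle_x$, the dual operator of $\mathcal M$ is $\mathcal M|_{\Gamma_c(X;F)}$. In particular, $\mathcal M$ is surjective if and only if $\mathcal M|_{\Gamma_c(X;F)}$ is injective.
   Context: Weighted graph: $X$ countable, $b\colon X\times X\to[0,\infty)$ with $b(x,x)=0$, $b(x,y)=b(y,x)$, $\sum_y b(x,y)<\infty$; locally finite means each $x$ has only finitely many $y$ with $b(x,y)>0$. Hermitian vector bundle: family $F=(F_x)$ of finite-dimensional complex inner product spaces $\langle\cdot,\cdot\rangle_x$ (linear in second variable); $\Gamma(X;F)=\prod_xF_x$ with the product topology; $\Gamma_c(X;F)$ its finitely supported elements. Connection: unitary $\Phi_{xy}\colon F_y\to F_x$ with $\Phi_{yx}=\Phi_{xy}^{-1}$. Self-adjoint bundle endomorphism: self-adjoint $W(x)\colon F_x\to F_x$. $\mathcal M f(x)=\sum_y b(x,y)(f(x)-\Phi_{xy}f(y))+W(x)f(x)$. The dual operator $\mathcal M'$ on $\Gamma_c(X;F)$ is defined by $(\mathcal M'\varphi,f)=(\varphi,\mathcal Mf)$ for all $f\in\Gamma(X;F)$. *)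

From HB Require Import structures.
From mathcomp Require Import all_boot all_order all_algebra.
From mathcomp Require Import complex.
From mathcomp Require Import all_classical all_reals all_analysis.
Import Order.TTheory GRing.Theory Num.Theory.
Import numFieldNormedType.Exports.

Set Implicit Arguments.
Unset Strict Implicit.
Unset Printing Implicit Defensive.

Local Open Scope ring_scope.
Local Open Scope classical_set_scope.

(* The usual (metric) topology on C = R[i], induced by its norm. *)
HB.instance Definition _ (R : rcfType) := PseudoPointedMetric.copy R[i] (R[i])^o.

Section Bundles.
Variables (R : realType) (X : countType) (n : X -> nat).

(* Fibre F_x = C^(n x) with the standard Hermitian inner product. *)
Definition fibre (x : X) : Type := 'cV[R[i]]_(n x).

Definition Gamma : topologicalType := prod_topology fibre.

Definition hdot (k : nat) (u v : 'cV[R[i]]_k) : R[i] :=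
  \sum_(i < k) (u i 0)^* * v i 0.

Definition adjmx (p q : nat) (A : 'M[R[i]]_(p, q)) : 'M[R[i]]_(q, p) :=
  (map_mx Num.conj A)^T.

Definition weighted_graph (b : X -> X -> R) : Prop :=
  (forall x y, 0 <= b x y) /\ (forall x, b x x = 0) /\
  (forall x y, b x y = b y x).

Definition locally_finite (b : X -> X -> R) : Prop :=
  forall x, finite_set [set y | 0 < b x y].

Definition connection (Phi : forall x y : X, 'M[R[i]]_(n x, n y)) : Prop :=
  forall x y,
    (adjmx (Phi x y) *m Phi x y = 1%:M /\ Phi x y *m adjmx (Phi x y) = 1%:M) /\
    (Phi y x *m Phi x y = 1%:M /\ Phi x y *m Phi y x = 1%:M).

Definition selfadjoint_endo (W : forall x : X, 'M[R[i]]_(n x)) : Prop :=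
  forall x, adjmx (W x) = W x.

(* M f (x) = sum_y b(x,y) (f(x) - Phi_xy f(y)) + W(x) f(x).
   The sum is a finitely supported sum (fsbig); for a locally finite graph
   the summand has finite support, so this is the (finite) series. *)
Definition Mop (b : X -> X -> R) (Phi : forall x y : X, 'M[R[i]]_(n x, n y))
  (W : forall x : X, 'M[R[i]]_(n x)) (f : Gamma) : Gamma :=
  fun x => \sum_(y \in [set: X]) ((b x y)%:C%C *: (f x - Phi x y *m f y))
           + W x *m f x.

Definition fin_supp (f : Gamma) : Prop := finite_set [set x | f x != 0].

Definition pairing (phi f : Gamma) : R[i] :=
  \sum_(x \in [set: X]) hdot (phi x) (f x).

End Bundles.

From HB Require Import structures.
From mathcomp Require Import all_boot all_order all_algebra.
From mathcomp Require Import complex.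
From mathcomp Require Import all_classical all_reals all_analysis.
From mathcomp Require Import ring.
Import Order.TTheory GRing.Theory Num.Theory.
Import numFieldNormedType.Exports.

Set Implicit Arguments.
Unset Strict Implicit.
Unset Printing Implicit Defensive.

Local Open Scope ring_scope.
Local Open Scope classical_set_scope.

(* Formal self-adjointness of M for the pairing is a direct computation: the
   weight is symmetric, the connection unitary and the potential self-adjoint.
   This gives the dual operator and the implication "surjective => injective
   on Gamma_c".  For the converse, write M f = g in coordinates: a countable
   linear system in countably many unknowns, each equation involving finitely
   many of them.  Injectivity of M on Gamma_c says that the equations are
   linearly independent, so every finite subsystem is solvable.  A solution of
   the whole system is then built one unknown at a time, keeping every finite
   subsystem solvable: over the solutions of a finite subsystem, with the
   unknowns already fixed, the next unknown ranges over an affine subspace of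
   the scalars, hence over a single point or over all scalars, and in both
   cases a value can be fixed once and for all. *)

Lemma fsbigT_seq (T : choiceType) (V : nmodType) (r : seq T) (F : T -> V) :
  uniq r -> (forall i, i \notin r -> F i = 0) ->
  \sum_(i \in [set: T]) F i = \sum_(i <- r) F i.
Proof.
move=> ur F0; rewrite [RHS]fsbig_seq //; apply/esym/fsbig_widen => // i [_].
by move=> /negP /F0.
Qed.

Lemma big_seq_supp (T : choiceType) (V : nmodType) (r1 r2 : seq T) (F : T -> V) :
  uniq r1 -> uniq r2 ->
  (forall i, i \notin r1 -> F i = 0) -> (forall i, i \notin r2 -> F i = 0) ->
  \sum_(i <- r1) F i = \sum_(i <- r2) F i.
Proof. by move=> u1 u2 F1 F2; rewrite -(fsbigT_seq u1 F1) (fsbigT_seq u2 F2). Qed.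

Lemma continuous_prod_topology (T : topologicalType) (I : Type)
    (U : I -> topologicalType) (h : T -> prod_topology U) :
  (forall i, continuous (fun t => h t i)) -> continuous h.
Proof.
move=> ch t; apply/cvg_sup => i A.
rewrite nbhsE => -[B [[C oC <-] Ct] sBA].
apply: (filterS (fun t' (Ct' : C (h t' i)) => sBA _ Ct')).
by apply: ch; apply: open_nbhs_nbhs.
Qed.

Lemma continuous_mx (T U : topologicalType) m k (h : T -> 'M[U]_(m, k)) :
  (forall a c, continuous (fun t => h t a c)) -> continuous h.
Proof.
move=> ch t A [P hP sPA].
apply: (filterS (fun t' (H : forall ac : 'I_m * 'I_k, P ac.1 ac.2 (h t' ac.1 ac.2)) =>
  sPA _ (fun a c => H (a, c)))).
by apply: filter_forall => -[a c]; apply: ch; apply: hP.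
Qed.

Lemma continuous_sum (K : numFieldType) (V : normedModType K) (T : topologicalType)
    (I : Type) (r : seq I) (g : I -> T -> V) :
  (forall i, continuous (g i)) -> continuous (fun t => \sum_(i <- r) g i t).
Proof.
move=> cg; rewrite -fct_sumE; elim: r => [|i r IH]; rewrite ?big_nil ?big_cons.
  exact: cst_continuous.
by move=> t; apply: continuousD; [exact: cg | exact: IH].
Qed.

Lemma continuous_mulmx (K : numFieldType) (T : topologicalType) m k p
    (A : 'M[K]_(m, k)) (h : T -> 'M[K]_(k, p)) :
  continuous h -> continuous (fun t => A *m h t).
Proof.
move=> ch; apply: continuous_mx => a c; under eq_fun do rewrite mxE.
apply: (@continuous_sum K K^o) => j t; apply: continuousM; first exact: cst_continuous.
exact: continuous_comp (ch t) (@coord_continuous K _ _ j c _).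
Qed.

Section HermitianProduct.
Variable R : realType.
Implicit Types (k : nat).

Lemma hdotDl k (u v w : 'cV[R[i]]_k) : hdot (u + v) w = hdot u w + hdot v w.
Proof. by rewrite /hdot -big_split; apply: eq_bigr => a _; rewrite mxE rmorphD mulrDl. Qed.

Lemma hdotDr k (u v w : 'cV[R[i]]_k) : hdot u (v + w) = hdot u v + hdot u w.
Proof. by rewrite /hdot -big_split; apply: eq_bigr => a _; rewrite mxE mulrDr. Qed.

Lemma hdotZl k c (u w : 'cV[R[i]]_k) : hdot (c *: u) w = c^* * hdot u w.
Proof. by rewrite /hdot mulr_sumr; apply: eq_bigr => a _; rewrite mxE rmorphM mulrA. Qed.

Lemma hdotZr k c (u w : 'cV[R[i]]_k) : hdot u (c *: w) = c * hdot u w.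
Proof. by rewrite /hdot mulr_sumr; apply: eq_bigr => a _; rewrite mxE mulrCA. Qed.

Lemma hdot0l k (w : 'cV[R[i]]_k) : hdot 0 w = 0.
Proof. by rewrite -(scale0r 0) hdotZl rmorph0 mul0r. Qed.

Lemma hdot0r k (w : 'cV[R[i]]_k) : hdot w 0 = 0.
Proof. by rewrite -(scale0r 0) hdotZr mul0r. Qed.

Lemma hdotBl k (u v w : 'cV[R[i]]_k) : hdot (u - v) w = hdot u w - hdot v w.
Proof. by rewrite hdotDl -scaleN1r hdotZl rmorphN1 mulN1r. Qed.

Lemma hdotBr k (u v w : 'cV[R[i]]_k) : hdot u (v - w) = hdot u v - hdot u w.
Proof. by rewrite hdotDr -scaleN1r hdotZr mulN1r. Qed.

Lemma hdot_suml k (I : Type) (r : seq I) (F : I -> 'cV[R[i]]_k) w :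
  hdot (\sum_(j <- r) F j) w = \sum_(j <- r) hdot (F j) w.
Proof. exact: (big_morph _ (fun u v => hdotDl u v w) (hdot0l w)). Qed.

Lemma hdot_sumr k (I : Type) (r : seq I) (F : I -> 'cV[R[i]]_k) w :
  hdot w (\sum_(j <- r) F j) = \sum_(j <- r) hdot w (F j).
Proof. exact: (big_morph _ (hdotDr w) (hdot0r w)). Qed.

Lemma hdotMl k p (A : 'M[R[i]]_(k, p)) (u : 'cV[R[i]]_p) (v : 'cV[R[i]]_k) :
  hdot (A *m u) v = hdot u (adjmx A *m v).
Proof.
rewrite /hdot; under eq_bigr do rewrite mxE rmorph_sum mulr_suml.
rewrite exchange_big /=; apply: eq_bigr => j _.
rewrite mxE mulr_sumr; apply: eq_bigr => a _.
by rewrite /adjmx !mxE rmorphM -mulrA mulrCA.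
Qed.

Lemma hdot_ge0 k (u : 'cV[R[i]]_k) : 0 <= hdot u u.
Proof. by apply: sumr_ge0 => a _; rewrite mulrC mul_conjC_ge0. Qed.

Lemma hdot_eq0 k (u : 'cV[R[i]]_k) : hdot u u = 0 -> u = 0.
Proof.
move=> /eqP; rewrite psumr_eq0 => [/allP u0|a _]; last by rewrite mulrC mul_conjC_ge0.
apply/matrixP => a j; rewrite (ord1 j) mxE.
by have /implyP/(_ isT) := u0 a (mem_index_enum a); rewrite mulrC mul_conjC_eq0 => /eqP.
Qed.

End HermitianProduct.

Section CountableLinearSystem.
Variables (K : fieldType) (C : countType) (E : eqType) (lam : E -> (C -> K) -> K).
Hypothesis lam_lin : forall e u v s,
  lam e (fun c => u c + s * v c) = lam e u + s * lam e v.
Hypothesis lam_local : forall e, exists D : seq C,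
  forall u v, {in D, u =1 v} -> lam e u = lam e v.
Hypothesis lam_free : forall es : seq E, uniq es -> forall cf : E -> K,
  (forall u, \sum_(e <- es) cf e * lam e u = 0) -> {in es, forall e, cf e = 0}.

Definition solves (g : E -> K) (F : seq E) (u : C -> K) :=
  {in F, forall e, lam e u = g e}.

Lemma lamB e u v : lam e (fun c => u c - v c) = lam e u - lam e v.
Proof.
have := lam_lin e u v (-1); rewrite mulN1r => <-.
by congr (lam e _); apply: funext => c; rewrite mulN1r.
Qed.

Lemma lam_sum e u (r : seq E) (a : E -> K) (v : E -> C -> K) :
  lam e (fun c => u c + \sum_(j <- r) a j * v j c) =
  lam e u + \sum_(j <- r) a j * lam e (v j).
Proof.
elim: r => [|j r IH].
  by rewrite big_nil addr0; congr (lam e _); apply: funext => c; rewrite big_nil addr0.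
transitivity (lam e (fun c => (u c + \sum_(i <- r) a i * v i c) + a j * v j c)).
  by congr (lam e _); apply: funext => c; rewrite big_cons; ring.
by rewrite lam_lin IH big_cons; ring.
Qed.

Lemma solvable_uniq (es : seq E) (g : E -> K) : uniq es -> exists u, solves g es u.
Proof.
elim: es g => [g _|e es IH g /= /andP[e_es u_es]]; first by exists (fun=> 0).
have [[h [h0 he]]|] := pselect (exists h, solves (fun=> 0) es h /\ lam e h != 0).
  have [u0 su0] := IH g u_es.
  exists (fun c => u0 c + (g e - lam e u0) / lam e h * h c) => e'.
  rewrite inE lam_lin => /predU1P[->|e'es]; first by rewrite divfK // addrC subrK.
  by rewrite (h0 e') //= mulr0 addr0 su0.
(* Otherwise [lam e] vanishes on the solutions of the homogeneous system [es],
   so it is a combination of the [lam e'], against independence. *)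
move=> no_h; exfalso.
have [v sv] := choice (fun e1 => IH (fun e' => (e' == e1)%:R) u_es).
pose cf e' := if e' == e then -1 else lam e (v e').
have ues' : uniq (e :: es) by rewrite /= e_es.
suff /(lam_free ues') /(_ e (mem_head _ _)) : forall u, \sum_(j <- e :: es) cf j * lam j u = 0.
  by rewrite /cf eqxx => /eqP; rewrite oppr_eq0 oner_eq0.
move=> u; rewrite big_cons {1}/cf eqxx mulN1r addrC; apply/eqP; rewrite subr_eq0.
have -> : \sum_(j <- es) cf j * lam j u = \sum_(j <- es) lam j u * lam e (v j).
  rewrite !big_seq; apply: eq_bigr => j jes; rewrite /cf mulrC.
  by case: eqP => // je; rewrite -je jes in e_es.
rewrite eq_sym -subr_eq0 -sumrN; under eq_bigr do rewrite -mulNr.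
rewrite -(lam_sum e u es (fun j => - lam j u)); apply/eqP.
apply: contra_notP no_h => /eqP ne0.
exists (fun c => u c + \sum_(j <- es) (- lam j u) * v j c); split => // e' e'es.
rewrite lam_sum (bigD1_seq e') //= sv // eqxx mulr1.
rewrite big1 ?addr0 ?subrr // => j /negbTE nj.
by rewrite sv // eq_sym nj mulr0.
Qed.

Lemma solvable_finite (F : seq E) (g : E -> K) : exists u, solves g F u.
Proof.
have [u su] := solvable_uniq g (undup_uniq F).
by exists u => e eF; apply: su; rewrite mem_undup.
Qed.

Variable g : E -> K.

Definition compatible (A : pred C) (h : C -> K) :=
  forall F : seq E, exists2 u, solves g F u & {in A, u =1 h}.

Lemma compatible_sub A B h : {subset B <= A} -> compatible A h -> compatible B h.
Proof.
by move=> BA Ah F; have [u su Au] := Ah F; exists u => // c /BA; apply: Au.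
Qed.

Lemma compatible_extend A h c : compatible A h ->
  exists h', {in A, h' =1 h} /\ compatible [predU1 c & A] h'.
Proof.
(* Either a finite subsystem pins down the value at [c], or every finite
   subsystem has two solutions that differ at [c], and the line through them
   reaches any prescribed value at [c]. *)
move=> Ah; have [u1 _ Au1] := Ah [::].
have [[F0 [p det]]|free] := pselect (exists F0 p,
    forall u, solves g F0 u -> {in A, u =1 h} -> u c = p).
  have [u0 su0 Au0] := Ah F0; exists u0; split => // F.
  have [u su Au] := Ah (F ++ F0).
  exists u => [e eF|c']; first by apply: su; rewrite mem_cat eF.
  have su0' : solves g F0 u by move=> e eF0; apply: su; rewrite mem_cat eF0 orbT.
  case/predU1P => [->|c'A]; first by rewrite (det u0 su0 Au0) (det u su0' Au).
  by rewrite Au // Au0.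
exists u1; split => // F; have [u su Au] := Ah F.
have [u2 [su2 Au2 u2c]] : exists u2, [/\ solves g F u2, {in A, u2 =1 h} & u2 c != u c].
  apply: contra_notP free => no_u2; exists F, (u c); move=> u2 su2 Au2.
  by apply/eqP; apply: contra_notP no_u2 => /negP ne; exists u2.
pose s := (u1 c - u c) / (u2 c - u c).
exists (fun c0 => u c0 + s * (u2 c0 - u c0)) => [e eF|c'].
  by rewrite lam_lin lamB su // su2 // subrr mulr0 addr0.
case/predU1P => [->|c'A]; first by rewrite /s divfK ?subr_eq0 // addrC subrK.
by rewrite Au // Au2 // subrr mulr0 addr0 Au1.
Qed.

Lemma extend_exists A h c : exists h',
  {in A, h' =1 h} /\ (compatible A h -> compatible [predU1 c & A] h').
Proof.
have [Ah|nAh] := pselect (compatible A h); last by exists h; split => // /nAh.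
by have [h' [Ah' ch']] := compatible_extend c Ah; exists h'.
Qed.

Definition extend A h c : C -> K := projT1 (cid (extend_exists A h c)).

(* [approx k] fixes the coordinates of code [< k] under [pickle]; step [k]
   fixes the coordinate of code [k], if there is one. *)
Definition first_coords k : pred C := [pred c | (pickle c < k)%N].

Lemma first_coordsS k c :
  c \in first_coords k.+1 -> pickle_inv k = Some c \/ c \in first_coords k.
Proof.
rewrite !inE ltnS leq_eqVlt => /orP[/eqP <-|ck]; [left; exact: pickleK_inv | by right].
Qed.

Fixpoint approx k : C -> K :=
  if k is k'.+1 then
    if pickle_inv k' is Some c then extend (first_coords k') (approx k') c
    else approx k'
  else fun=> 0.

Lemma approx_step k : {in first_coords k, approx k.+1 =1 approx k} /\
  (compatible (first_coords k) (approx k) ->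
   compatible (first_coords k.+1) (approx k.+1)).
Proof.
rewrite /=; case Ek: (pickle_inv k) => [c|]; last first.
  by split => // Ak; apply: compatible_sub Ak => c' /first_coordsS[]; rewrite ?Ek.
have [agree ext] := projT2 (cid (extend_exists (first_coords k) (approx k) c)).
split => // /ext Ak; apply: compatible_sub Ak => c' /first_coordsS[|c'k].
  by rewrite Ek => -[->]; rewrite inE eqxx.
by rewrite inE c'k orbT.
Qed.

Lemma approx_compatible k : compatible (first_coords k) (approx k).
Proof.
elim: k => [F|k IH]; last exact: (approx_step k).2 IH.
by have [u su] := solvable_finite F g; exists u => // c; rewrite inE ltn0.
Qed.

Lemma approx_stable k k' : (k <= k')%N -> {in first_coords k, approx k' =1 approx k}.
Proof.
move=> /subnK <-; elim: (k' - k)%N => [//|d IH] c ck.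
rewrite addSn (approx_step _).1 ?IH //; move: ck; rewrite !inE => /leq_trans; apply; exact: leq_addl.
Qed.

Theorem solvable_system : exists u, forall e, lam e u = g e.
Proof.
exists (fun c => approx (pickle c).+1 c) => e.
have [D HD] := lam_local e.
pose N := \max_(c <- D) (pickle c).+1.
have leN c : c \in D -> ((pickle c).+1 <= N)%N by move=> cD; exact: leq_bigmax_seq.
have [u su Au] := approx_compatible N [:: e].
rewrite -(su e (mem_head _ _)); apply: HD => c cD.
by rewrite Au ?inE ?leN // (approx_stable (leN c cD)) // inE.
Qed.

End CountableLinearSystem.

Section Operator.
Context {R : realType} {X : countType} {n : X -> nat} {b : X -> X -> R}
  {Phi : forall x y : X, 'M[R[i]]_(n x, n y)} {W : forall x : X, 'M[R[i]]_(n x)}.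
Hypotheses (wg : weighted_graph b) (lf : locally_finite b).

Local Notation G := (Gamma R n).
Local Notation M := (Mop b Phi W).

Definition nbrs x : seq X := finmap.enum_fset (fset_set [set y | 0 < b x y]).

Lemma nbrs_uniq x : uniq (nbrs x).
Proof. exact: finmap.fset_uniq. Qed.

Lemma mem_nbrs x y : (y \in nbrs x) = (0 < b x y).
Proof. by have := in_fset_set (lf x) y => /= ->; apply/idP/idP; rewrite inE. Qed.

Lemma weight_notin_nbrs x y : y \notin nbrs x -> b x y = 0.
Proof.
rewrite mem_nbrs; have [b0 _] := wg.
by rewrite lt_def (b0 x y) andbT negbK => /eqP.
Qed.

Lemma weight_sym x y : b x y = b y x.
Proof. by case: wg => _ [_ ->]. Qed.

Lemma MopE (f : G) x : M f x =
  \sum_(y <- nbrs x) (b x y)%:C%C *: (f x - Phi x y *m f y) + W x *m f x.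
Proof.
rewrite /Mop (fsbigT_seq (nbrs_uniq x)) // => y /weight_notin_nbrs ->.
by rewrite scale0r.
Qed.

Lemma Mop_continuous : continuous M.
Proof.
apply: continuous_prod_topology => x; under eq_fun do rewrite MopE.
have cproj y : continuous (fun f : G => f y) by exact: proj_continuous.
move=> f; apply: (@continuousD _ _ _ (fun f : G => _) (fun f : G => _)).
  apply: continuous_sum => y {}f; apply: (@continuousZl_tmp _ _ _ (fun f : G => _)).
  apply: (@continuousB _ _ _ (fun f : G => _) (fun f : G => _)); first exact: cproj.
  exact (continuous_mulmx (A := Phi x y) (cproj y) (x := f)).
exact (continuous_mulmx (A := W x) (cproj x) (x := f)).
Qed.

Definition supp (phi : G) : seq X :=
  finmap.enum_fset (fset_set [set x | phi x != 0]).

Lemma supp_uniq phi : uniq (supp phi).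
Proof. exact: finmap.fset_uniq. Qed.

Lemma notin_supp phi x : fin_supp phi -> x \notin supp phi -> phi x = 0.
Proof.
move=> fphi; have := in_fset_set fphi x => /= ->.
by rewrite notin_setE /= => /negP; rewrite negbK => /eqP.
Qed.

Definition supp_nbhd (phi : G) : seq X :=
  undup (supp phi ++ flatten [seq nbrs y | y <- supp phi]).

Lemma supp_nbhd_uniq phi : uniq (supp_nbhd phi).
Proof. exact: undup_uniq. Qed.

Lemma supp_sub_nbhd phi x : x \in supp phi -> x \in supp_nbhd phi.
Proof. by move=> xS; rewrite mem_undup mem_cat xS. Qed.

Lemma nbrs_sub_nbhd phi x y : x \in supp phi -> y \in nbrs x -> y \in supp_nbhd phi.
Proof.
by move=> xS yx; rewrite mem_undup mem_cat; apply/orP; right; apply/flatten_mapP; exists x.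
Qed.

Lemma Mop_notin_nbhd phi x : fin_supp phi -> x \notin supp_nbhd phi -> M phi x = 0.
Proof.
move=> fphi xN; have xS : x \notin supp phi by apply: contra xN; exact: supp_sub_nbhd.
rewrite MopE notin_supp // mulmx0 addr0 big1_seq // => y /andP[_ yx].
rewrite (@notin_supp _ y) ?mulmx0 ?subr0 ?scaler0 //; apply: contra xN => yS.
by apply: (nbrs_sub_nbhd yS); rewrite mem_nbrs weight_sym -mem_nbrs.
Qed.

Lemma Mop_local (f g : G) x :
  (forall y, y \in x :: nbrs x -> f y = g y) -> M f x = M g x.
Proof.
move=> fg; rewrite !MopE (fg x (mem_head _ _)).
rewrite (eq_big_seq (fun y => (b x y)%:C%C *: (g x - Phi x y *m g y))) //.
by move=> y yN; rewrite (fg y) // inE yN orbT.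
Qed.

Lemma fin_supp_Mop (phi : G) : fin_supp phi -> fin_supp (M phi).
Proof.
move=> fphi; apply: (@sub_finite_set _ _ [set` supp_nbhd phi]); last exact: finite_seq.
by move=> x /= Mx; apply/negPn; apply: contra Mx => /(Mop_notin_nbhd fphi) ->.
Qed.

Lemma pairingE (phi f : G) (r : seq X) : uniq r -> (forall x, x \notin r -> phi x = 0) ->
  pairing phi f = \sum_(x <- r) hdot (phi x) (f x).
Proof. by move=> ur phi0; rewrite /pairing (fsbigT_seq ur) // => x /phi0 ->; exact: hdot0l. Qed.

Hypotheses (con : connection Phi) (sa : selfadjoint_endo W).

Lemma adjmx_Phi x y : adjmx (Phi x y) = Phi y x.
Proof.
have [[adjPP _] [_ PPinv]] := con x y.
by rewrite -[adjmx _]mulmx1 -PPinv mulmxA adjPP mul1mx.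
Qed.

Lemma hdot_Mop_l (phi f : G) x : hdot (M phi x) (f x) =
  \sum_(y <- nbrs x) (b x y)%:C%C * hdot (phi x) (f x)
  - \sum_(y <- nbrs x) (b x y)%:C%C * hdot (phi y) (Phi y x *m f x)
  + hdot (phi x) (W x *m f x).
Proof.
rewrite MopE hdotDl hdot_suml hdotMl sa -sumrB; congr (_ + _); apply: eq_bigr => y _.
have real_b : ((b x y)%:C%C)^* = (b x y)%:C%C by apply/conj_Creal/complex_realP; exists (b x y).
by rewrite hdotZl real_b hdotBl hdotMl adjmx_Phi mulrBr.
Qed.

Lemma hdot_Mop_r (phi f : G) x : hdot (phi x) (M f x) =
  \sum_(y <- nbrs x) (b x y)%:C%C * hdot (phi x) (f x)
  - \sum_(y <- nbrs x) (b x y)%:C%C * hdot (phi x) (Phi x y *m f y)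
  + hdot (phi x) (W x *m f x).
Proof.
rewrite MopE hdotDr hdot_sumr -sumrB; congr (_ + _); apply: eq_bigr => y _.
by rewrite hdotZr hdotBr mulrBr.
Qed.

Lemma pairing_Mop (phi f : G) : fin_supp phi -> pairing (M phi) f = pairing phi (M f).
Proof.
(* Restrict both pairings to [U]; the cross terms then agree after exchanging
   the double sum, by the symmetry of [b]. *)
move=> fphi; set U := supp_nbhd phi.
have phi0 x : x \notin U -> phi x = 0.
  by move=> xU; apply: notin_supp => //; apply: contra xU; exact: supp_sub_nbhd.
rewrite (pairingE _ (supp_nbhd_uniq phi)); last by move=> x /(Mop_notin_nbhd fphi).
rewrite (pairingE _ (supp_nbhd_uniq phi) phi0).
under eq_bigr do rewrite hdot_Mop_l.
under [RHS]eq_bigr do rewrite hdot_Mop_r.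
rewrite !big_split /= !sumrN; congr (_ + - _ + _).
transitivity (\sum_(x <- U) \sum_(y <- U) (b x y)%:C%C * hdot (phi y) (Phi y x *m f x)).
  apply: eq_bigr => x _; apply: big_seq_supp => [||y /weight_notin_nbrs ->|y /phi0 ->].
  - exact: nbrs_uniq.
  - exact: supp_nbhd_uniq.
  - by rewrite mul0r.
  - by rewrite hdot0l mulr0.
rewrite exchange_big /=; apply: eq_bigr => x _; under eq_bigr do rewrite weight_sym.
apply: big_seq_supp => [||y yU|y /weight_notin_nbrs ->].
- exact: supp_nbhd_uniq.
- exact: nbrs_uniq.
- have [xS|xS] := boolP (x \in supp phi); last by rewrite notin_supp // hdot0l mulr0.
  rewrite weight_notin_nbrs ?mul0r //; apply: contra yU; exact: nbrs_sub_nbhd.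
- by rewrite mul0r.
Qed.

Lemma pairing_eq0 (psi : G) : fin_supp psi -> pairing psi psi = 0 -> psi = (fun=> 0).
Proof.
move=> fpsi; rewrite (pairingE _ (supp_uniq psi)); last by move=> x /(notin_supp fpsi).
move=> /eqP; rewrite psumr_eq0 => [/allP psi0|x _]; last exact: hdot_ge0.
apply: functional_extensionality_dep => x.
have [xS|] := boolP (x \in supp psi); last exact: notin_supp.
by apply: hdot_eq0; apply/eqP; have /implyP := psi0 x xS; apply.
Qed.

Lemma Mop_surj_inj : (forall g : G, exists f : G, M f = g) ->
  forall phi : G, fin_supp phi -> M phi = (fun=> 0) -> phi = (fun=> 0).
Proof.
move=> surj phi fphi Mphi0; have [f Mf] := surj phi.
apply: pairing_eq0 => //; rewrite -{2}Mf -pairing_Mop // Mphi0.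
by rewrite /pairing fsbig1 // => x _; exact: hdot0l.
Qed.

Definition coord : countType := {x : X & 'I_(n x)}.

Definition coord_of x (a : 'I_(n x)) : coord := Tagged (fun x => 'I_(n x)) a.

Definition of_coords (u : coord -> R[i]) : G := fun x => \col_(a < n x) u (coord_of a).

Definition coords (f : G) : coord -> R[i] := fun c => f (tag c) (tagged c) 0.

Lemma coordsK : cancel coords of_coords.
Proof.
move=> f; apply: functional_extensionality_dep => x; apply/matrixP => a j.
by rewrite (ord1 j) mxE.
Qed.

Definition coord_eqn (e : coord) (u : coord -> R[i]) : R[i] := coords (M (of_coords u)) e.

Lemma Mop_linear (f1 f2 : G) s :
  M (fun x => f1 x + s *: f2 x) = fun x => M f1 x + s *: M f2 x.
Proof.
apply: functional_extensionality_dep => x; rewrite !MopE.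
have split_term y : (b x y)%:C%C *: (f1 x + s *: f2 x - Phi x y *m (f1 y + s *: f2 y)) =
    (b x y)%:C%C *: (f1 x - Phi x y *m f1 y) + s *: ((b x y)%:C%C *: (f2 x - Phi x y *m f2 y)).
  rewrite mulmxDr -scalemxAr scalerA mulrC -scalerA -scalerDr; congr (_ *: _).
  by rewrite scalerBr opprD addrACA.
rewrite (eq_bigr _ (fun y _ => split_term y)) big_split -scaler_sumr.
by rewrite mulmxDr -scalemxAr scalerDr addrACA.
Qed.

Lemma coord_eqn_lin e u v s :
  coord_eqn e (fun c => u c + s * v c) = coord_eqn e u + s * coord_eqn e v.
Proof.
rewrite /coord_eqn /coords.
have -> : of_coords (fun c => u c + s * v c) = fun x => of_coords u x + s *: of_coords v x.
  by apply: functional_extensionality_dep => x; apply/matrixP => a j; rewrite !mxE.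
by rewrite Mop_linear !mxE.
Qed.

Lemma coord_eqn_local e : exists D : seq coord,
  forall u v, {in D, u =1 v} -> coord_eqn e u = coord_eqn e v.
Proof.
exists [seq coord_of a | y <- tag e :: nbrs (tag e), a <- enum 'I_(n y)] => u v uv.
rewrite /coord_eqn /coords (Mop_local (f := of_coords u) (g := of_coords v)) //.
move=> y yN; apply/matrixP => a j; rewrite !mxE; apply: uv.
exact: (allpairs_f_dep coord_of yN (mem_enum _ a)).
Qed.

Section CoefficientSection.
Variables (es : seq coord) (cf : coord -> R[i]).
Hypothesis es_uniq : uniq es.

Definition coeff_section : G := fun x =>
  \col_(a < n x) if coord_of a \in es then (cf (coord_of a))^* else 0.

Definition coeff_supp : seq X := undup [seq tag c | c <- es].

Lemma coeff_section_notin x : x \notin coeff_supp -> coeff_section x = 0.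
Proof.
move=> xS; apply/matrixP => a j; rewrite !mxE; case: ifPn => // ces.
by case/negP: xS; rewrite mem_undup; exact: (map_f tag ces).
Qed.

Lemma fin_supp_coeff_section : fin_supp coeff_section.
Proof.
apply: (@sub_finite_set _ _ [set` coeff_supp]); last exact: finite_seq.
by move=> x /= cx; apply/negPn; apply: contra cx => /coeff_section_notin ->.
Qed.

Lemma pairing_coeff_section (f : G) :
  pairing coeff_section f = \sum_(c <- es) cf c * coords f c.
Proof.
rewrite (pairingE f (undup_uniq [seq tag c | c <- es]) coeff_section_notin).
pose F c := if c \in es then cf c * coords f c else 0.
transitivity (\sum_(c <- [seq coord_of a | x <- coeff_supp, a <- enum 'I_(n x)]) F c).
  rewrite big_allpairs_dep; apply: eq_bigr => x _.
  rewrite /hdot -big_enum; apply: eq_bigr => a _; rewrite /F mxE /coords /=.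
  by case: ifP => _; rewrite ?conjCK // rmorph0 mul0r.
have es_sub c : c \in es -> c \in [seq coord_of a | x <- coeff_supp, a <- enum 'I_(n x)].
  case: c => x a ces; apply: (allpairs_f_dep coord_of _ (mem_enum _ a)).
  by rewrite mem_undup; exact: (map_f tag ces).
have all_uniq : uniq [seq coord_of a | x <- coeff_supp, a <- enum 'I_(n x)].
  apply: allpairs_uniq_dep => [||[x1 a1] [x2 a2] _ _ //]; first exact: undup_uniq.
  by move=> x _; exact: enum_uniq.
rewrite (big_seq_supp all_uniq es_uniq).
- by rewrite big_seq [RHS]big_seq; apply: eq_bigr => c ces; rewrite /F ces.
- by move=> c; rewrite /F; case: ifP => // /es_sub ->.
- by move=> c; rewrite /F => /negbTE ->.
Qed.

End CoefficientSection.

Lemma coord_eqn_free :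
  (forall phi : G, fin_supp phi -> M phi = (fun=> 0) -> phi = (fun=> 0)) ->
  forall es, uniq es -> forall cf : coord -> R[i],
  (forall u, \sum_(e <- es) cf e * coord_eqn e u = 0) -> {in es, forall e, cf e = 0}.
Proof.
move=> inj es ues cf dep [x a] ees.
have fphi := fin_supp_coeff_section es cf.
have Mphi0 : M (coeff_section es cf) = (fun=> 0).
  apply: pairing_eq0; first exact: fin_supp_Mop.
  rewrite pairing_Mop // pairing_coeff_section // -[RHS](dep (coords (M (coeff_section es cf)))).
  by rewrite /coord_eqn coordsK.
have /(congr1 (fun phi : G => phi x a 0)) := inj _ fphi Mphi0.
by rewrite !mxE /coord_of ees => /eqP; rewrite conjC_eq0 => /eqP.
Qed.

Lemma Mop_inj_surj :
  (forall phi : G, fin_supp phi -> M phi = (fun=> 0) -> phi = (fun=> 0)) ->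
  forall g : G, exists f : G, M f = g.
Proof.
move=> inj g.
have [u Mu] := solvable_system coord_eqn_lin coord_eqn_local (coord_eqn_free inj) (coords g).
exists (of_coords u); rewrite -[g]coordsK -[M _]coordsK; congr of_coords.
exact: funext.
Qed.

End Operator.

Theorem lemma4p2 (R : realType) (X : countType) (n : X -> nat)
  (b : X -> X -> R) (Phi : forall x y : X, 'M[R[i]]_(n x, n y))
  (W : forall x : X, 'M[R[i]]_(n x)) :
  weighted_graph b -> locally_finite b ->
  connection Phi -> selfadjoint_endo W ->
  let M := Mop b Phi W in
  continuous M /\
  (forall phi : Gamma R n, fin_supp phi ->
     fin_supp (M phi) /\ (forall f : Gamma R n, pairing (M phi) f = pairing phi (M f))) /\
  ((forall g : Gamma R n, exists f : Gamma R n, M f = g) <->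
   (forall phi : Gamma R n, fin_supp phi -> M phi = (fun x => 0) -> phi = (fun x => 0))).
Proof.
move=> wg lf con sa M; split; first exact: Mop_continuous.
split; first by move=> phi fphi; split; [exact: fin_supp_Mop | move=> f; exact: pairing_Mop].
by split; [exact: Mop_surj_inj | exact: Mop_inj_surj].
Qed.
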